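(* Let $S=\mathcal{OR}_n$ and $\sigma\in S$. Then (i) $\sigma S=\{\tau\in S: J(\tau)\subseteq J(\sigma)\}$; (ii) $S\sigma=\{\tau\in S: I(\tau)\subseteq I(\sigma)\}$; (iii) if $\mathrm{rk}(\sigma)\ne m$, then $S\sigma S=\{\tau\in S:\mathrm{rk}(\tau)\le\mathrm{rk}(\sigma)\}$; if $\mathrm{rk}(\sigma)=m$, then $S\sigma S=\{\tau\in S:\mathrm{rk}(\tau)<m, \text{ or } \mathrm{rk}(\tau)=m \text{ and } \mathrm{tp}(\tau)=\mathrm{tp}(\sigma)\}$.
   Context: Let $m\ge 1$, $n=2m$, $\mathbf n=\{1,\dots,n\}$, $\theta(i)=n+1-i$, written $\bar i$. A proper subset $I\subset\mathbf n$ is admissible if $I\cap\theta(I)=\emptyset$; $\mathbf n$ and $\emptyset$ are also admissible. For an injective partial map $\sigma$ of $\mathbf n$, $I(\sigma)$ is its domain, $J(\sigma)$ its image, $\mathrm{rk}(\sigma)=|I(\sigma)|$; the product $\sigma\tau$ is composition of partial maps (apply $\tau$ first). $W=\{\sigma\in S_n:\sigma(\bar i)=\overline{\sigma(i)}\ \forall i\}$, $W'=\{\sigma\in W:|\sigma(\{1,\dots,m\})\cap\{m+1,\dots,n\}|\text{ even}\}$. An admissible $m$-subset is of type I if it contains an even number of elements $>m$, type II otherwise. $\mathcal{OR}_n$ consists of the injective partial maps $\sigma$ with: $\mathrm{rk}(\sigma)<m$ and $I(\sigma),J(\sigma)$ admissible; or $\mathrm{rk}(\sigma)=m$ and $I(\sigma),J(\sigma)$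 admissible of the same type; or $\sigma\in W'$. It is a monoid under composition. For $\mathrm{rk}(\sigma)=m$, $\mathrm{tp}(\sigma)$ denotes the type of $I(\sigma)$. *)

(* Points of n = 2m are encoded 0-indexed as 'I_(2*m):
   the paper's point k (1 <= k <= n) is the ordinal k-1. *)
From mathcomp Require Import all_boot.
Set Implicit Arguments. Unset Strict Implicit. Unset Printing Implicit Defensive.

Section OR.
Variable m : nat.
Local Notation n := (2 * m).

Definition pmapo := {ffun 'I_n -> option 'I_n}.

(* theta(i) = n+1-i in 1-indexed terms, i.e. n-1-i here *)
Definition theta (i : 'I_n) : 'I_n := rev_ord i.

Definition pinjective (s : pmapo) : bool :=
  [forall i, forall j, ((s i != None) && (s i == s j)) ==> (i == j)].

Definition dom (s : pmapo) : {set 'I_n} := [set i | s i != None].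
Definition pimage (s : pmapo) (A : {set 'I_n}) : {set 'I_n} :=
  [set j | [exists i in A, s i == Some j]].
Definition img (s : pmapo) : {set 'I_n} := pimage s setT.
Definition rk (s : pmapo) : nat := #|dom s|.

(* product s t : apply t first, then s *)
Definition pmcomp (s t : pmapo) : pmapo :=
  [ffun i => if t i is Some j then s j else None].

Definition admissible (A : {set 'I_n}) : bool :=
  (A == setT) || (A :&: (theta @: A) == set0).

(* elements > m (1-indexed) are the ordinals >= m *)
Definition upper : {set 'I_n} := [set i : 'I_n | m <= i].
Definition lower : {set 'I_n} := [set i : 'I_n | i < m].

Definition typeI (A : {set 'I_n}) : bool := ~~ odd #|A :&: upper|.
Definition tp (s : pmapo) : bool := typeI (dom s).

Definition inW (s : pmapo) : bool :=
  [forall i, s i != None] && pinjective s &&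
  [forall i, s (theta i) == omap theta (s i)].

Definition inW' (s : pmapo) : bool :=
  inW s && ~~ odd #|pimage s lower :&: upper|.

Definition inOR (s : pmapo) : bool :=
  pinjective s &&
  [|| [&& rk s < m, admissible (dom s) & admissible (img s)],
      [&& rk s == m, admissible (dom s), admissible (img s)
        & typeI (dom s) == typeI (img s)]
    | inW' s].

End OR.

From mathcomp Require Import all_boot zify.

(** The whole argument rests on two closure properties of OR_n: it is stable
    under composition and under the partial inverse [pinv]. For maps of rank at
    most m this is bookkeeping with admissible (isotropic) sets: at rank m the
    domains and images of the factors are forced to match, so the types agree.
    For the signed permutations W a parity count does the work: the summand
    [(m <= s i) (+) (m <= i)] is invariant under theta, so for every transversal
    X of the pairs {i, theta i} the number of elements > m in s(X) and in X
    differ in parity by the same bit as for X = {1..m}; elements of W' therefore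
    preserve the type of admissible m-sets.

    Given closure, (i) and (ii) follow from tau = sigma (sigma^-1 tau) and
    tau = (tau sigma^-1) sigma. In (iii), composition can only lower the rank,
    and at rank m it transports the type through the equal domains and images.
    Conversely tau lies in the left ideal of sigma rho, where rho is an
    injection of I(tau) into I(sigma) (or rho = tau when sigma is total); rho
    lies in OR_n exactly under the rank and type condition. *)

Set Implicit Arguments. Unset Strict Implicit. Unset Printing Implicit Defensive.

Section RookMonoid.
Variable m : nat.
Local Notation n := (2 * m).
Local Notation theta := (@theta m).
Implicit Types (s t u sigma tau rho : pmapo m) (A X Y : {set 'I_n}).

Lemma eq_pmapo s t : (forall i j, s i = Some j <-> t i = Some j) -> s = t.
Proof.
move=> st; apply/ffunP => i.
case Es: (s i) => [j|]; first by symmetry; apply/st.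
by case Et: (t i) => [j|] //; move/st: Et; rewrite Es.
Qed.

Lemma pinjP s :
  reflect (forall i j k, s i = Some k -> s j = Some k -> i = j) (pinjective s).
Proof.
apply: (iffP forallP) => [inj_s i j k si sj | inj_s i].
  by have /forallP/(_ j)/implyP/(_ _)/eqP-> := inj_s i; rewrite // si sj eqxx.
apply/forallP => j; apply/implyP; case si: (s i) => [k|] //= /eqP sj.
by apply/eqP/(inj_s i j k).
Qed.

Lemma pmcomp_Some s t i k :
  pmcomp s t i = Some k <-> exists2 j, t i = Some j & s j = Some k.
Proof.
rewrite ffunE; case: (t i) => [j|]; last by split => // -[].
by split => [|[_ [<-]]//]; exists j.
Qed.

Lemma pmcompA s t u : pmcomp s (pmcomp t u) = pmcomp (pmcomp s t) u.
Proof. by apply/ffunP => i; rewrite !ffunE; case: (u i) => // j; rewrite ffunE. Qed.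

Lemma pinjective_comp s t :
  pinjective s -> pinjective t -> pinjective (pmcomp s t).
Proof.
move=> /pinjP inj_s /pinjP inj_t; apply/pinjP => i i' k.
move=> /pmcomp_Some[j ti sj] /pmcomp_Some[j' ti' sj'].
by move: ti'; rewrite -(inj_s _ _ _ sj sj'); apply: inj_t.
Qed.

Definition pinv s : pmapo m := [ffun j => [pick i | s i == Some j]].

Lemma pinvP s i j : pinjective s -> (pinv s j = Some i <-> s i = Some j).
Proof.
move=> /pinjP inj_s; rewrite ffunE; case: pickP => [i' /eqP si'|none_j].
  by split => [[<-] //|si]; rewrite (inj_s _ _ _ si si').
by split=> // si; have := none_j i; rewrite si eqxx.
Qed.

Lemma pinjective_pinv s : pinjective (pinv s).
Proof.
apply/pinjP => j j' i; rewrite !ffunE.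
case: pickP => // i1 /eqP si1 [<-]; case: pickP => // i2 /eqP si2 [e].
by move: si2; rewrite e si1 => -[].
Qed.

Lemma pinvK s : pinjective s -> pinv (pinv s) = s.
Proof.
by move=> inj_s; apply: eq_pmapo => i j; rewrite pinvP ?pinjective_pinv // pinvP.
Qed.

Lemma pinv_comp s t : pinjective s -> pinjective t ->
  pinv (pmcomp s t) = pmcomp (pinv t) (pinv s).
Proof.
move=> inj_s inj_t; apply: eq_pmapo => k i.
rewrite pinvP ?pinjective_comp // !pmcomp_Some.
by split=> -[j]; rewrite ?pinvP // => *; exists j; rewrite ?pinvP.
Qed.

Lemma pimageP s A j :
  reflect (exists2 i, i \in A & s i = Some j) (j \in pimage s A).
Proof.
rewrite inE; apply: (iffP existsP) => [[i /andP[Ai /eqP si]]|[i Ai si]].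
  by exists i.
by exists i; rewrite Ai si eqxx.
Qed.

Definition totalize s i := odflt i (s i).

Lemma pimage_imset s A : pimage s A = totalize s @: (A :&: dom s).
Proof.
apply/setP => j; apply/pimageP/imsetP => [[i Ai si]|[i]].
  by exists i; rewrite /totalize ?si // !inE Ai si.
rewrite !inE /totalize => /andP[Ai]; case si: (s i) => [k|] // _ ->.
by exists i.
Qed.

Lemma card_pimage s A : pinjective s -> #|pimage s A| = #|A :&: dom s|.
Proof.
move=> /pinjP inj_s; rewrite pimage_imset card_in_imset // => i i'.
rewrite !inE /totalize => /andP[_]; case si: (s i) => [j|] // _.
case/andP=> _; case si': (s i') => [j'|] //= _ e.
by apply: (inj_s i i' j); rewrite // e.
Qed.

Lemma card_img s : pinjective s -> #|img s| = rk s.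
Proof. by move=> inj_s; rewrite card_pimage // setTI. Qed.

Lemma pimage_comp s t A : pimage (pmcomp s t) A = pimage s (pimage t A).
Proof.
apply/setP => k; apply/pimageP/pimageP => [[i Ai /pmcomp_Some[j tj sj]]|].
  by exists j => //; apply/pimageP; exists i.
by case=> j /pimageP[i Ai ti] sj; exists i => //; apply/pmcomp_Some; exists j.
Qed.

Lemma img_pmcomp s t : img (pmcomp s t) = pimage s (img t).
Proof. exact: pimage_comp. Qed.

Lemma dom_pinv s : dom (pinv s) = img s.
Proof.
apply/setP => j; rewrite inE ffunE; apply/idP/pimageP => [|[i _ si]].
  by case: pickP => // i /eqP si _; exists i.
by case: pickP => // /(_ i); rewrite si eqxx.
Qed.

Lemma img_pinv s : pinjective s -> img (pinv s) = dom s.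
Proof.
move=> inj_s; apply/setP => i; rewrite [i \in dom s]inE; apply/pimageP/idP => [[j _]|].
  by move/pinvP->.
by case si: (s i) => [j|] // _; exists j; rewrite ?pinvP.
Qed.

Lemma rk_pinv s : pinjective s -> rk (pinv s) = rk s.
Proof. by move=> inj_s; rewrite /rk dom_pinv card_img. Qed.

Lemma pimage_pinvK s A : pinjective s -> A \subset img s ->
  pimage s (pimage (pinv s) A) = A.
Proof.
move=> inj_s sAs; apply/setP => k; apply/pimageP/idP => [[j /pimageP[k' Ak']]|Ak].
  by rewrite pinvP // => -> [<-].
have /pimageP[i _ si] := subsetP sAs k Ak.
by exists i => //; apply/pimageP; exists k; rewrite ?pinvP.
Qed.

Lemma dom_pmcomp_sub s t : dom (pmcomp s t) \subset dom t.
Proof. by apply/subsetP => i; rewrite !inE ffunE; case: (t i). Qed.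

Lemma img_pmcomp_sub s t : img (pmcomp s t) \subset img s.
Proof.
by apply/subsetP => k; rewrite img_pmcomp => /pimageP[j _ sj]; apply/pimageP; exists j.
Qed.

Lemma dom_pmcomp s t : img t \subset dom s -> dom (pmcomp s t) = dom t.
Proof.
move=> sts; apply/setP => i; rewrite !inE ffunE.
case ti: (t i) => [j|] //.
have : j \in dom s by apply: (subsetP sts); apply/pimageP; exists i.
by rewrite inE.
Qed.

Lemma rk_pmcomp_r s t : rk (pmcomp s t) <= rk t.
Proof. exact/subset_leq_card/dom_pmcomp_sub. Qed.

Lemma rk_pmcomp_l s t : pinjective s -> pinjective t -> rk (pmcomp s t) <= rk s.
Proof.
move=> inj_s inj_t; rewrite -card_img ?pinjective_comp // -(card_img inj_s).
exact/subset_leq_card/img_pmcomp_sub.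
Qed.

Lemma dom_pmcomp_eq s t : rk t <= rk (pmcomp s t) -> dom (pmcomp s t) = dom t.
Proof. by move=> le_rk; apply/eqP; rewrite eqEcard dom_pmcomp_sub. Qed.

Lemma img_pmcomp_eq s t : pinjective s -> pinjective t ->
  rk s <= rk (pmcomp s t) -> img (pmcomp s t) = img s.
Proof.
move=> inj_s inj_t le_rk; apply/eqP.
by rewrite eqEcard img_pmcomp_sub !card_img ?pinjective_comp.
Qed.

Lemma pmcomp_pinv_l s t : pinjective s -> img t \subset img s ->
  pmcomp s (pmcomp (pinv s) t) = t.
Proof.
move=> inj_s sts; apply/ffunP => i; rewrite !ffunE; case ti: (t i) => [k|] //.
have /pimageP[j _ sj] : k \in img s by apply: (subsetP sts); apply/pimageP; exists i.
by have /pinvP-> := sj.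
Qed.

Lemma pmcomp_pinv_r s t : pinjective s -> dom t \subset dom s ->
  pmcomp (pmcomp t (pinv s)) s = t.
Proof.
move=> inj_s sts; apply/ffunP => i; rewrite !ffunE; case si: (s i) => [j|].
  by rewrite ffunE; have /pinvP-> := si.
by case ti: (t i) => //; have := subsetP sts i; rewrite !inE si ti => /(_ isT).
Qed.

Definition embed (A B : {set 'I_n}) : pmapo m :=
  [ffun i => if i \in A then Some (nth i (enum B) (index i (enum A))) else None].

Lemma embedP (A B : {set 'I_n}) : #|A| <= #|B| ->
  [/\ dom (embed A B) = A, pinjective (embed A B) & img (embed A B) \subset B].
Proof.
move=> leAB; have ltB i : i \in A -> index i (enum A) < size (enum B).
  by move=> Ai; rewrite -cardE (leq_trans _ leAB) // cardE index_mem mem_enum.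
split.
- by apply/setP => i; rewrite inE ffunE; case: (i \in A).
- apply/pinjP => i i' k; rewrite !ffunE.
  case Ai: (i \in A) => //; case Ai': (i' \in A) => // -[<-] [].
  rewrite (set_nth_default i i') ?ltB // => /eqP.
  rewrite nth_uniq ?ltB ?enum_uniq // => /eqP e.
  by rewrite -[i](nth_index i (s := enum A)) ?mem_enum // -e nth_index ?mem_enum.
- apply/subsetP => k /pimageP[i _]; rewrite ffunE.
  by case Ai: (i \in A) => // -[<-]; rewrite -mem_enum mem_nth ?ltB.
Qed.

Lemma thetaK : involutive theta.
Proof. exact: rev_ordK. Qed.

Lemma theta_inj : injective theta.
Proof. exact: rev_ord_inj. Qed.

Lemma leq_theta (i : 'I_n) : (m <= theta i) = (i < m).
Proof. by rewrite /=; have := ltn_ord i; lia. Qed.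

Definition isotropic X := [disjoint X & theta @: X].

Lemma isotropicP X :
  reflect (forall i, i \in X -> theta i \notin X) (isotropic X).
Proof.
apply: (iffP idP) => [isoX i Xi | thX].
  by rewrite -(mem_imset _ _ theta_inj) thetaK (disjointFr isoX).
rewrite /isotropic -setI_eq0; apply/eqP/setP => j; rewrite !inE.
by apply/negP => /andP[Xj /imsetP[i Xi ej]]; move: (thX i Xi); rewrite -ej Xj.
Qed.

Lemma isotropicS X Y : X \subset Y -> isotropic Y -> isotropic X.
Proof. by move=> sXY; apply: disjointW => //; apply: imsetS. Qed.

Lemma isotropic_admissible X : isotropic X -> admissible X.
Proof. by move=> isoX; rewrite /admissible setI_eq0 -/(isotropic X) isoX orbT. Qed.

Lemma admissible_isotropic X : #|X| < n -> admissible X = isotropic X.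
Proof.
move=> ltXn; rewrite /admissible setI_eq0 -/(isotropic X) orb_idl // => /eqP eXT.
by rewrite eXT cardsT card_ord ltnn in ltXn.
Qed.

Lemma theta_in_transversal X i : isotropic X -> #|X| = m ->
  (theta i \in X) = (i \notin X).
Proof.
move=> isoX cardX; case Xi: (i \in X); first exact/negbTE/(isotropicP X isoX).
have : #|X :|: theta @: X| = #|'I_n|.
  rewrite cardsU; have /eqP-> : X :&: theta @: X == set0 by rewrite setI_eq0.
  rewrite cards0 card_imset ?card_ord ?cardX ?subn0 ?addnn -?mul2n //.
  exact: theta_inj.
move=> cardU; have /eqP/setP/(_ i) : X :|: theta @: X == setT.
  by rewrite eqEcard subsetT cardsT cardU leqnn.
by rewrite !inE Xi /= => /imsetP[j Xj ->]; rewrite thetaK Xj.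
Qed.

Lemma card_lower : #|lower m| = m.
Proof.
have le_mn : m <= n by lia.
rewrite -sum1_card (eq_bigl (fun i : 'I_n => i < m)) => [|i]; last by rewrite inE.
by rewrite (big_ord_narrow le_mn) sum1_card card_ord.
Qed.

Lemma isotropic_lower : isotropic (lower m).
Proof. by apply/isotropicP => i; rewrite !inE /=; lia. Qed.

Lemma lower_upper : lower m :&: upper m = set0.
Proof. by apply/setP => i; rewrite !inE; lia. Qed.

Lemma odd_card_upper A :
  odd #|A :&: upper m| = \big[addb/false]_(i in A) (m <= i).
Proof.
rewrite -sum1_card (big_morph odd oddD (erefl (odd 0))) big_mkcond [RHS]big_mkcond.
by apply: eq_bigr => i _; rewrite !inE; case: (i \in A); case: (m <= i).
Qed.

Lemma big_transversal R (idx : R) (op : Monoid.com_law idx) X (F : 'I_n -> R) :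
  isotropic X -> #|X| = m -> (forall i, F (theta i) = F i) ->
  \big[op/idx]_(i in X) F i = \big[op/idx]_(i in lower m) F i.
Proof.
move=> isoX cardX F_theta.
rewrite (bigID (mem (lower m))) [RHS](bigID (mem X)) /=; congr (op _ _).
  by apply: eq_bigl => i; rewrite andbC.
rewrite (reindex_inj theta_inj); apply: eq_big => [i|i _]; last exact: F_theta.
by rewrite /= !theta_in_transversal ?card_lower ?isotropic_lower // negbK andbC.
Qed.

Lemma inWP s : reflect
  [/\ forall i, s i != None, pinjective s & forall i, s (theta i) = omap theta (s i)]
  (inW s).
Proof.
apply: (iffP andP) => [[/andP[/forallP tot_s inj_s] /forallP th_s] | [tot_s inj_s th_s]];
  last by rewrite inj_s andbT; split; apply/forallP => i; rewrite ?th_s.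
by split=> // i; apply/eqP.
Qed.

Lemma inW_comp s t : inW s -> inW t -> inW (pmcomp s t).
Proof.
move=> /inWP[tot_s inj_s th_s] /inWP[tot_t inj_t th_t]; apply/inWP; split.
- by move=> i; rewrite ffunE; case: (t i) (tot_t i).
- exact: pinjective_comp.
- by move=> i; rewrite !ffunE th_t; case: (t i).
Qed.

Lemma dom_W s : inW s -> dom s = setT.
Proof. by case/inWP=> tot_s _ _; apply/setP => i; rewrite !inE tot_s. Qed.

Lemma rk_W s : inW s -> rk s = n.
Proof. by move=> Ws; rewrite /rk dom_W // cardsT card_ord. Qed.

Lemma img_W s : inW s -> img s = setT.
Proof.
move=> Ws; have /inWP[_ inj_s _] := Ws.
by apply/eqP; rewrite eqEcard subsetT cardsT card_ord card_img // rk_W // leqnn.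
Qed.

Lemma inW_pinv s : inW s -> inW (pinv s).
Proof.
move=> Ws; have img_s := img_W Ws; case/inWP: Ws => _ inj_s th_s.
have tot_s' j : pinv s j != None by have := in_setT j; rewrite -img_s -dom_pinv inE.
apply/inWP; split=> // [|j]; first exact: pinjective_pinv.
case e: (pinv s j) (tot_s' j) => [i|] // _.
by apply/pinvP => //; rewrite th_s; move/pinvP: e => ->.
Qed.

Lemma totalize_inj s : inW s -> injective (totalize s).
Proof.
case/inWP=> tot_s /pinjP inj_s _ i i'; rewrite /totalize.
case si: (s i) (tot_s i) => [j|] // _; case si': (s i') (tot_s i') => [j'|] // _ /= e.
by apply: (inj_s _ _ j si); rewrite si' e.
Qed.

Lemma totalize_theta s i : inW s -> totalize s (theta i) = theta (totalize s i).
Proof. by case/inWP=> tot_s _ th_s; rewrite /totalize th_s; case: (s i) (tot_s i). Qed.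

Lemma pimage_W s X : inW s -> pimage s X = totalize s @: X.
Proof. by move=> Ws; rewrite pimage_imset dom_W // setIT. Qed.

Lemma card_pimage_W s X : inW s -> #|pimage s X| = #|X|.
Proof. by move=> Ws; rewrite pimage_W // card_imset //; apply: totalize_inj. Qed.

Lemma isotropic_pimage_W s X : inW s -> isotropic X -> isotropic (pimage s X).
Proof.
move=> Ws /isotropicP isoX; rewrite pimage_W //.
apply/isotropicP => _ /imsetP[i Xi ->].
by rewrite -totalize_theta // mem_imset ?isoX //; apply: totalize_inj.
Qed.

Lemma odd_upper_pimage_W s X : inW s -> isotropic X -> #|X| = m ->
  odd #|pimage s X :&: upper m|
  = odd #|X :&: upper m| (+) odd #|pimage s (lower m) :&: upper m|.
Proof.
move=> Ws isoX cardX.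
have inj_s Y : {in Y &, injective (totalize s)}.
  by move=> i j _ _; apply: totalize_inj.
rewrite !pimage_W // !odd_card_upper !big_imset //=.
have lower0 : \big[addb/false]_(i in lower m) (m <= i) = false.
  by rewrite -odd_card_upper lower_upper cards0.
have := big_transversal addb isoX cardX
  (F := fun i => (m <= totalize s i) (+) (m <= i)).
rewrite !big_split /= lower0 addbF => <-; first by rewrite addbC -addbA addbb addbF.
by move=> i; rewrite totalize_theta // !leq_theta ![m <= _]leqNgt addbN addNb negbK.
Qed.

Lemma typeI_pimage_W' s X : inW' s -> isotropic X -> #|X| = m ->
  typeI (pimage s X) = typeI X.
Proof.
case/andP=> Ws /negbTE even_s isoX cardX.
by rewrite /typeI odd_upper_pimage_W // even_s addbF.
Qed.

Lemma inW'_comp s t : inW' s -> inW' t -> inW' (pmcomp s t).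
Proof.
move=> W's /andP[Wt even_t]; have /andP[Ws _] := W's.
rewrite /inW' inW_comp // pimage_comp -/(typeI _) typeI_pimage_W' //.
  exact: isotropic_pimage_W isotropic_lower.
by rewrite card_pimage_W // card_lower.
Qed.

Lemma inW'_pinv s : inW' s -> inW' (pinv s).
Proof.
move=> W's; have /andP[Ws _] := W's; have /inWP[_ inj_s _] := Ws.
have Ws' := inW_pinv Ws.
rewrite /inW' Ws' -/(typeI _) -(typeI_pimage_W' W's).
- by rewrite pimage_pinvK ?img_W ?subsetT // /typeI lower_upper cards0.
- exact: isotropic_pimage_W Ws' isotropic_lower.
- by rewrite card_pimage_W // card_lower.
Qed.

Definition lowrank s : Prop :=
  [/\ rk s <= m, isotropic (dom s), isotropic (img s)
    & rk s = m -> typeI (dom s) = typeI (img s)].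

Hypothesis m_gt0 : 0 < m.

Lemma inOR_cases s : inOR s <-> pinjective s /\ (inW' s \/ lowrank s).
Proof.
rewrite /inOR; split => [/andP[inj_s] | [inj_s [W's | [le_m iso_d iso_i ty]]]].
- have iso X : #|X| <= m -> admissible X = isotropic X.
    by move=> le_m; apply: admissible_isotropic; lia.
  have card_i : #|img s| = rk s by rewrite card_img.
  case/or3P => [/and3P[lt_m ad ai] | /and4P[/eqP e ad ai /eqP ty] | W's];
    split=> //; [right | right | by left].
    have le_m := ltnW lt_m; rewrite !iso ?card_i // in ad ai.
    by split=> // e; rewrite e ltnn in lt_m.
  have le_m : rk s <= m by rewrite e.
  by rewrite !iso ?card_i // in ad ai.
- by rewrite inj_s W's !orbT.
- rewrite inj_s !isotropic_admissible //=.
  by case: ltngtP le_m => // e _; rewrite (ty e) eqxx orbT.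
Qed.

Lemma typeI_dom_img s : inOR s -> rk s = m -> typeI (dom s) = typeI (img s).
Proof.
case/inOR_cases => _ [/andP[Ws _] | [_ _ _ ty]] // e.
by move: e; rewrite rk_W //; lia.
Qed.

Lemma inOR_pinv s : inOR s -> inOR (pinv s).
Proof.
case/inOR_cases=> inj_s [W's | [le_m iso_d iso_i ty]]; apply/inOR_cases.
  by split; [apply: pinjective_pinv | left; apply: inW'_pinv].
split; first exact: pinjective_pinv.
by right; split; rewrite ?rk_pinv ?dom_pinv ?img_pinv // => /ty ->.
Qed.

Lemma inOR_comp_W'l s t : inW' s -> inOR t -> inOR (pmcomp s t).
Proof.
move=> W's /inOR_cases[inj_t OR_t]; have /andP[Ws _] := W's.
have /inWP[_ inj_s _] := Ws; have inj_st := pinjective_comp inj_s inj_t.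
case: OR_t => [W't | [le_m iso_d iso_i ty]].
  by apply/inOR_cases; split; last by left; apply: inW'_comp.
have dom_st : dom (pmcomp s t) = dom t by apply: dom_pmcomp; rewrite dom_W ?subsetT.
have rk_st : rk (pmcomp s t) = rk t by rewrite /rk dom_st.
apply/inOR_cases; split=> //.
right; split; rewrite ?rk_st ?dom_st ?img_pmcomp //.
- exact: isotropic_pimage_W.
- by move=> e; rewrite typeI_pimage_W' ?card_img ?ty.
Qed.

Lemma inOR_comp_lowrank s t : pinjective s -> pinjective t ->
  lowrank s -> lowrank t -> inOR (pmcomp s t).
Proof.
move=> inj_s inj_t [le_s iso_ds iso_is ty_s] [le_t iso_dt iso_it ty_t].
have inj_st := pinjective_comp inj_s inj_t.
have le_st_t := rk_pmcomp_r s t; have le_st_s := rk_pmcomp_l inj_s inj_t.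
apply/inOR_cases; split=> //; right; split.
- exact: leq_trans le_st_t le_t.
- exact: isotropicS (dom_pmcomp_sub s t) iso_dt.
- exact: isotropicS (img_pmcomp_sub s t) iso_is.
move=> e.
have rk_t : rk t = m by move: le_st_t; rewrite e; lia.
have rk_s : rk s = m by move: le_st_s; rewrite e; lia.
have sub_ts : img t \subset dom s.
  apply/setIidPl/eqP; rewrite eqEcard subsetIl -card_pimage //.
  by rewrite -img_pmcomp !card_img // e rk_t leqnn.
have img_t : img t = dom s.
  by apply/eqP; rewrite eqEcard sub_ts card_img // rk_t -/(rk s) rk_s leqnn.
by rewrite dom_pmcomp_eq ?rk_t ?e // img_pmcomp_eq ?rk_s ?e // ty_t // img_t ty_s.
Qed.

Lemma inOR_comp s t : inOR s -> inOR t -> inOR (pmcomp s t).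
Proof.
move=> OR_s OR_t; have /inOR_cases[inj_s [W's | low_s]] := OR_s.
  exact: inOR_comp_W'l.
have /inOR_cases[inj_t [W't | low_t]] := OR_t; last exact: inOR_comp_lowrank.
rewrite -[pmcomp s t]pinvK ?pinjective_comp // pinv_comp //.
by apply/inOR_pinv/inOR_comp_W'l; [apply: inW'_pinv | apply: inOR_pinv].
Qed.

Lemma principal_right_idealP sigma tau : inOR sigma ->
  (exists2 rho, inOR rho & tau = pmcomp sigma rho)
  <-> inOR tau /\ img tau \subset img sigma.
Proof.
move=> OR_s; have /andP[inj_s _] := OR_s.
split=> [[rho OR_r ->] | [OR_t sub_ts]].
  by split; [apply: inOR_comp | apply: img_pmcomp_sub].
exists (pmcomp (pinv sigma) tau); last by rewrite pmcomp_pinv_l.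
by apply: inOR_comp => //; apply: inOR_pinv.
Qed.

Lemma principal_left_idealP sigma tau : inOR sigma ->
  (exists2 rho, inOR rho & tau = pmcomp rho sigma)
  <-> inOR tau /\ dom tau \subset dom sigma.
Proof.
move=> OR_s; have /andP[inj_s _] := OR_s.
split=> [[rho OR_r ->] | [OR_t sub_ts]].
  by split; [apply: inOR_comp | apply: dom_pmcomp_sub].
exists (pmcomp tau (pinv sigma)); last by rewrite pmcomp_pinv_r.
by apply: inOR_comp => //; apply: inOR_pinv.
Qed.

Definition rk_tp_le tau sigma : bool :=
  if rk sigma != m then rk tau <= rk sigma
  else (rk tau < m) || (rk tau == m) && (tp tau == tp sigma).

Lemma rk_tp_le_rk tau sigma : rk_tp_le tau sigma -> rk tau <= rk sigma.
Proof. by rewrite /rk_tp_le; case: eqP => [-> /orP[/ltnW | /andP[/eqP->]] |]. Qed.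

Lemma rk_tp_le_pmcomp3 rho1 sigma rho2 : inOR rho1 -> inOR sigma -> inOR rho2 ->
  rk_tp_le (pmcomp (pmcomp rho1 sigma) rho2) sigma.
Proof.
move=> OR1 OR_s OR2; set alpha := pmcomp rho1 sigma; set tau := pmcomp alpha rho2.
have OR_a : inOR alpha by apply: inOR_comp.
have OR_t : inOR tau by apply: inOR_comp.
have [/andP[inj_a _] /andP[inj2 _]] := (OR_a, OR2).
have le_as : rk alpha <= rk sigma := rk_pmcomp_r rho1 sigma.
have le_ta : rk tau <= rk alpha := rk_pmcomp_l inj_a inj2.
rewrite /rk_tp_le; case: eqP => [rk_s | _]; last exact: leq_trans le_ta le_as.
rewrite rk_s in le_as; have le_tm : rk tau <= m by lia.
rewrite ltn_neqAle le_tm andbT; case: eqP => //= rk_t.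
have rk_a : rk alpha = m by lia.
apply/eqP; rewrite /tp typeI_dom_img //.
have -> : img tau = img alpha by rewrite img_pmcomp_eq // -/tau rk_a rk_t.
by rewrite -typeI_dom_img // dom_pmcomp_eq // rk_s rk_a.
Qed.

Lemma pmcomp3_of_rk_tp_le sigma tau : inOR sigma -> inOR tau ->
  rk_tp_le tau sigma ->
  exists rho1 rho2,
    [/\ inOR rho1, inOR rho2 & tau = pmcomp (pmcomp rho1 sigma) rho2].
Proof.
move=> OR_s OR_t le_ts.
suff [rho2 OR2 sub_t] :
    exists2 rho2, inOR rho2 & dom tau \subset dom (pmcomp sigma rho2).
  have /(principal_left_idealP tau)[|rho1 OR1 ->] := conj OR_t sub_t.
    exact: inOR_comp.
  by exists rho1, rho2; rewrite pmcompA.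
have le_rk := rk_tp_le_rk le_ts.
have /inOR_cases[inj_s [/andP[Ws _] | [le_s iso_s _ _]]] := OR_s.
  by exists tau => //; rewrite dom_pmcomp // dom_W // subsetT.
have /inOR_cases[_ [/andP[Wt _] | [_ iso_t _ _]]] := OR_t.
  by move: le_rk; rewrite rk_W //; lia.
have [dom_e inj_e sub_e] := embedP le_rk.
exists (embed (dom tau) (dom sigma)); last by rewrite dom_pmcomp // dom_e.
have rk_e : rk (embed (dom tau) (dom sigma)) = rk tau by rewrite /rk dom_e.
apply/inOR_cases; split=> //; right; split; rewrite ?rk_e ?dom_e //.
- exact: leq_trans le_rk le_s.
- exact: isotropicS sub_e iso_s.
move=> rk_t.
have rk_s : rk sigma = m by lia.
have img_e : img (embed (dom tau) (dom sigma)) = dom sigma.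
  by apply/eqP; rewrite eqEcard sub_e card_img // rk_e rk_t -/(rk sigma) rk_s leqnn.
have /eqP tp_ts : tp tau == tp sigma.
  by move: le_ts; rewrite /rk_tp_le rk_s eqxx rk_t ltnn eqxx.
by rewrite img_e; apply: tp_ts.
Qed.

End RookMonoid.

Theorem proposition3p1 (m : nat) (hm : 1 <= m) (sigma : pmapo m) :
  inOR sigma ->
  (* (i) sigma S = { tau in S : J(tau) subset J(sigma) } *)
  (forall tau : pmapo m,
     (exists2 rho, inOR rho & tau = pmcomp sigma rho) <->
     (inOR tau /\ img tau \subset img sigma)) /\
  (* (ii) S sigma = { tau in S : I(tau) subset I(sigma) } *)
  (forall tau : pmapo m,
     (exists2 rho, inOR rho & tau = pmcomp rho sigma) <->
     (inOR tau /\ dom tau \subset dom sigma)) /\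
  (* (iii) *)
  (forall tau : pmapo m,
     (exists rho1 rho2, [/\ inOR rho1, inOR rho2 &
                           tau = pmcomp (pmcomp rho1 sigma) rho2]) <->
     (inOR tau /\
      (if rk sigma != m then rk tau <= rk sigma
       else (rk tau < m) || ((rk tau == m) && (tp tau == tp sigma))))).
Proof.
move=> OR_s; split; first by move=> tau; apply: principal_right_idealP.
split; first by move=> tau; apply: principal_left_idealP.
move=> tau; split=> [[rho1 [rho2 [OR1 OR2 ->]]] | [OR_t le_ts]].
  by split; [do 2?apply: inOR_comp | apply: rk_tp_le_pmcomp3].
exact: pmcomp3_of_rk_tp_le.
Qed.
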